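(* Let $G$ be a finite abelian group and let $k\in\mathbb{N}$ with \[k \ge \delta(G)\exp(G)|\mathcal{A}(G)|+ (\eta(G)- \mathsf{D}(G^-)).\] Then $\mathsf{D}_{k+1}(G)=\mathsf{D}_{k}(G)+\exp(G)$.
   Context: $G$ is written additively. A sequence over $G$ is an element of the (multiplicatively written) free abelian monoid $\mathcal{F}(G)$ over $G$, i.e. a finite unordered list of elements with repetitions; $|S|$ is the length, $\sigma(S)$ the sum of the terms. A zero-sum sequence has $\sigma(S)=0$; a minimal zero-sum sequence is a non-empty zero-sum sequence with no proper non-empty zero-sum subsequence. $\mathcal{A}(G)$ is the (finite) set of minimal zero-sum sequences over $G$. A factorization of a zero-sum sequence $B$ is a formal unordered product $A_1\cdot\ldots\cdot A_\ell$ of minimal zero-sum sequences with $A_1\cdots A_\ell=B$; factorizations are elements of the free abelian monoid $\mathsf{Z}(G)$ over $\mathcal{A}(G)$, $\pi:\mathsf{Z}(G)\to\mathcal{F}(G)$ evaluates the product, $|\zeta|$ is the number of factors, and $\mathsf{L}(B)$ (the set of lengths) is the set of lengths of factorizations of $B$. For $\zeta,\xi\in\mathsf{Z}(G)$, $\mathsf{d}(\zeta,\xi)=\max\{|\gcd(\zeta,\xi)^{-1}\zeta|,|\gcd(\zeta,\xi)^{-1}\xi|\}$. Two distinct $k,\ell\in \mathsf{L}(B)$ are adjacent lengths of $B$ if no element of $\mathsf{L}(B)$ lies strictly between them. For $\zeta\in\mathsf{Z}(G)$, $\delta(\zeta)$ is the smallest $m\in\mathbb{N}_0$ such that for every $k\in\mathbb{N}$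 for which $k$ and $|\zeta|$ are adjacent lengths of $\pi(\zeta)$ there is a factorization $\xi$ of $\pi(\zeta)$ with $|\xi|=k$ and $\mathsf{d}(\xi,\zeta)\le m$; $\delta(G)=\sup\{\delta(\zeta):\zeta\in\mathsf{Z}(G)\}$ (the successive distance, known to be finite). $\mathsf{D}_k(G)$ is the smallest $\ell$ such that every sequence of length at least $\ell$ has $k$ disjoint non-empty zero-sum subsequences; $\mathsf{D}(G)=\mathsf{D}_1(G)$. $\eta(G)$ is the smallest $\ell$ such that every sequence over $G$ of length at least $\ell$ has a non-empty zero-sum subsequence of length at most $\exp(G)$. $G^-$ denotes an abelian group with $G\cong G^-\oplus C_{\exp(G)}$. *)

From HB Require Import structures.
From mathcomp Require Import all_boot all_order all_algebra all_fingroup abelian.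
From Stdlib Require Import ClassicalEpsilon.
Set Implicit Arguments. Unset Strict Implicit. Unset Printing Implicit Defensive.
Import GRing.Theory.
Local Open Scope ring_scope.

(* A sequence over G (element of the free abelian monoid F(G)) is represented
   canonically by its multiplicity function. *)
Definition gseq (G : finZmodType) := {ffun G -> nat}.

Definition pbool (P : Prop) : bool :=
  if excluded_middle_informative P then true else false.

Section Defs.
Variable G : finZmodType.

Definition expG : nat := exponent [set: G].

Definition slen (S : gseq G) : nat := (\sum_(g : G) S g)%N.
Definition ssum (S : gseq G) : G := \sum_(g : G) g *+ S g.
Definition ssub (T S : gseq G) : bool := [forall g, (T g <= S g)%N].
Definition sprod (s : seq (gseq G)) : gseq G := [ffun g => (\sum_(A <- s) A g)%N].

Definition zero_sum (S : gseq G) : Prop := ssum S = 0.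

Definition minimal_zero_sum (A : gseq G) : Prop :=
  (0 < slen A)%N /\ zero_sum A /\
  forall T, ssub T A -> (0 < slen T)%N -> zero_sum T -> T = A.

(* |A(G)|: every minimal zero-sum sequence has all multiplicities <= |G|
   (each multiplicity is at most the order of the element), so A(G) is in
   bijection with the following finite set. *)
Definition card_atoms : nat :=
  #|[set f : {ffun G -> 'I_(#|G|.+1)} |
     pbool (minimal_zero_sum [ffun g => nat_of_ord (f g)]) ]|.

(* Factorizations: elements of Z(G), i.e. finite (unordered) lists of
   minimal zero-sum sequences; order is irrelevant for every notion below. *)
Definition is_factorization (z : seq (gseq G)) : Prop :=
  forall A, A \in z -> minimal_zero_sum A.

Definition factorization_of (z : seq (gseq G)) (B : gseq G) : Prop :=
  is_factorization z /\ sprod z = B.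

Definition in_lengths (B : gseq G) (l : nat) : Prop :=
  exists z, factorization_of z B /\ size z = l.

Definition gcd_size (z x : seq (gseq G)) : nat :=
  (\sum_(A <- undup (z ++ x)) minn (count_mem A z) (count_mem A x))%N.

Definition fdist (z x : seq (gseq G)) : nat :=
  maxn (size z - gcd_size z x) (size x - gcd_size z x).

Definition adjacent_lengths (B : gseq G) (k l : nat) : Prop :=
  k <> l /\ in_lengths B k /\ in_lengths B l /\
  forall m, (minn k l < m < maxn k l)%N -> ~ in_lengths B m.

(* delta(z) <= m  (the defining property of delta(z), monotone in m) *)
Definition delta_le (z : seq (gseq G)) (m : nat) : Prop :=
  forall k, adjacent_lengths (sprod z) k (size z) ->
    exists x, factorization_of x (sprod z) /\ size x = k /\ (fdist x z <= m)%N.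

(* dG = delta(G) = sup_z delta(z): dG is the least m with delta(z) <= m
   for all z in Z(G). *)
Definition is_succ_dist (dG : nat) : Prop :=
  (forall z, is_factorization z -> delta_le z dG) /\
  forall m, (forall z, is_factorization z -> delta_le z m) -> (dG <= m)%N.

Definition has_k_disjoint_zs (k : nat) (S : gseq G) : Prop :=
  exists Ts : seq (gseq G), size Ts = k /\
    (forall T, T \in Ts -> (0 < slen T)%N /\ zero_sum T) /\
    ssub (sprod Ts) S.

Definition is_Dk (k dk : nat) : Prop :=
  (forall S, (dk <= slen S)%N -> has_k_disjoint_zs k S) /\
  forall l, (forall S, (l <= slen S)%N -> has_k_disjoint_zs k S) -> (dk <= l)%N.

Definition has_short_zs (S : gseq G) : Prop :=
  exists T, ssub T S /\ (0 < slen T <= expG)%N /\ zero_sum T.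

Definition is_eta (e : nat) : Prop :=
  (forall S, (e <= slen S)%N -> has_short_zs S) /\
  forall l, (forall S, (l <= slen S)%N -> has_short_zs S) -> (e <= l)%N.

End Defs.

(* H is a possible G^-: G is isomorphic to H (+) C_exp(G);
   C_n is realised as 'I_(n.-1).+1 (n = exp(G) >= 1). *)
Definition is_Gminus (G H : finZmodType) : Prop :=
  exists f : {additive (H * 'I_(expG G).-1.+1)%type -> G}, bijective f.

From HB Require Import structures.
From mathcomp Require Import all_boot all_order all_algebra all_fingroup abelian.
From Stdlib Require Import Classical ClassicalEpsilon.
From mathcomp Require Import zify.
Set Implicit Arguments. Unset Strict Implicit. Unset Printing Implicit Defensive.
Import GRing.Theory.

(* Both bounds use D_k(G) >= D(G^-) + k exp(G) - 1, witnessed by T g^[k exp(G) - 1] with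
   T zero-sum free over G^- of length D(G^-) - 1 and g a generator of the C_exp(G) summand:
   a nonempty zero-sum subsequence contains g a positive multiple of exp(G) times.
   Upper bound: with the hypothesis this gives eta(G) <= D_k(G) + exp(G), so a short
   zero-sum subsequence can be split off any sequence of length D_k(G) + exp(G).
   Lower bound: let S be a sequence of length D_k(G) - 1 without k disjoint zero-sum
   subsequences and B = S (-sigma(S)); then every factorization of B has at most k atoms.
   In a factorization z of B of maximal length, the atoms shorter than exp(G) cover at
   most k(exp(G) - 1) terms. As D_k(G) >= D(G^-) + k exp(G) - 1, the remaining atoms have
   total length at least delta(G) exp(G) |A(G)| + eta(G) - 1, and the maximality of z
   (with the eta bound) forces at least delta(G) |A(G)| of them, so some atom A with
   |A| >= exp(G) occurs delta(G) times in z. The successive distance then shows that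
   A B has no factorization with more than |z| + 1 <= k + 1 atoms, so S A has no k + 1
   disjoint zero-sum subsequences, whence D_(k+1)(G) > |S A| >= D_k(G) + exp(G) - 1. *)

Lemma pboolP (P : Prop) : pbool P <-> P.
Proof. by rewrite /pbool; case: excluded_middle_informative. Qed.

Lemma sum_count_mem_cover (T : eqType) (u s : seq T) :
  uniq u -> {subset s <= u} -> \sum_(x <- u) count_mem x s = size s.
Proof.
move=> uniq_u; elim: s => [|a s IH] s_u; first by rewrite big1.
rewrite /= -IH => [|y y_s]; last by apply: s_u; rewrite inE y_s orbT.
rewrite big_split /= -add1n; congr (_ + _).
rewrite (bigD1_seq a) ?s_u ?mem_head //= eqxx big1_seq ?addn0 // => x /andP[xa _].
by rewrite eq_sym (negbTE xa).
Qed.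

Section Sequences.
Variable G : finZmodType.
Implicit Types (S T U B : gseq G) (s : seq (gseq G)).

(* In the multiplicative notation of F(G), [sadd S T] is the product S T,
   [sdiff S T] the quotient T^-1 S (when T | S) and [spow x m] the power x^[m]. *)
Definition sadd S T : gseq G := [ffun g => S g + T g].
Definition sdiff S T : gseq G := [ffun g => S g - T g].
Definition snil : gseq G := [ffun=> 0].
Definition spow (x : G) (m : nat) : gseq G := [ffun g => (g == x) * m].

Lemma ssubP T S : reflect (forall g, T g <= S g) (ssub T S).
Proof. exact: forallP. Qed.

Lemma ssub_refl S : ssub S S.
Proof. by apply/ssubP. Qed.

Lemma ssub_trans S T U : ssub S T -> ssub T U -> ssub S U.
Proof. by move=> /ssubP ST /ssubP TU; apply/ssubP => g; apply: leq_trans (ST g) (TU g). Qed.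

Lemma ssub_saddr S T : ssub S (sadd S T).
Proof. by apply/ssubP => g; rewrite ffunE leq_addr. Qed.

Lemma ssub_sadd2 S T S' T' : ssub S S' -> ssub T T' -> ssub (sadd S T) (sadd S' T').
Proof. by move=> /ssubP SS /ssubP TT; apply/ssubP => g; rewrite !ffunE leq_add. Qed.

Lemma saddC S T : sadd S T = sadd T S.
Proof. by apply/ffunP => g; rewrite !ffunE addnC. Qed.

Lemma saddI S : injective (sadd S).
Proof. by move=> T T' /ffunP eqST; apply/ffunP => g; have := eqST g; rewrite !ffunE => /addnI. Qed.

Lemma sadd_sdiff T S : ssub T S -> sadd T (sdiff S T) = S.
Proof. by move/ssubP => TS; apply/ffunP => g; rewrite !ffunE subnKC. Qed.

Lemma slen_sadd S T : slen (sadd S T) = slen S + slen T.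
Proof. by rewrite /slen -big_split; apply: eq_bigr => g _; rewrite ffunE. Qed.

Lemma ssum_sadd S T : ssum (sadd S T) = (ssum S + ssum T)%R.
Proof. by rewrite /ssum -big_split; apply: eq_bigr => g _; rewrite ffunE mulrnDr. Qed.

Lemma slen_ssub T S : ssub T S -> slen T <= slen S.
Proof. by move=> TS; rewrite -(sadd_sdiff TS) slen_sadd leq_addr. Qed.

Lemma slen_sdiff T S : ssub T S -> slen (sdiff S T) = slen S - slen T.
Proof. by move=> TS; rewrite -{2}(sadd_sdiff TS) slen_sadd addKn. Qed.

Lemma zero_sum_sdiff T S : ssub T S -> zero_sum S -> zero_sum T -> zero_sum (sdiff S T).
Proof.
by move=> TS; rewrite /zero_sum -{1}(sadd_sdiff TS) ssum_sadd => + zT; rewrite zT GRing.add0r.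
Qed.

Lemma slen_snil : slen snil = 0.
Proof. by rewrite /slen big1 // => g _; rewrite ffunE. Qed.

Lemma ssum_snil : ssum snil = 0%R.
Proof. by rewrite /ssum big1 // => g _; rewrite ffunE. Qed.

Lemma slen_spow x m : slen (spow x m) = m.
Proof.
rewrite /slen (bigD1 x) //= big1 => [|g /negbTE gx]; rewrite ffunE ?gx //.
by rewrite eqxx mul1n addn0.
Qed.

Lemma ssum_spow x m : ssum (spow x m) = (x *+ m)%R.
Proof.
rewrite /ssum (bigD1 x) //= big1 => [|g /negbTE gx]; rewrite ffunE ?gx //.
by rewrite eqxx mul1n GRing.addr0.
Qed.

Lemma slen_eq0 S : slen S = 0 -> S = snil.
Proof.
move=> S0; apply/ffunP => g; rewrite !ffunE.
by apply/eqP; rewrite -leqn0 -S0 /slen (bigD1 g) //= leq_addr.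
Qed.

Lemma sprod_nil : sprod [::] = snil.
Proof. by apply/ffunP => g; rewrite !ffunE big_nil. Qed.

Lemma sprod_cons A s : sprod (A :: s) = sadd A (sprod s).
Proof. by apply/ffunP => g; rewrite !ffunE big_cons. Qed.

Lemma sprod_cat s1 s2 : sprod (s1 ++ s2) = sadd (sprod s1) (sprod s2).
Proof. by apply/ffunP => g; rewrite !ffunE big_cat. Qed.

Lemma sprod_perm s1 s2 : perm_eq s1 s2 -> sprod s1 = sprod s2.
Proof. by move=> eq_s; apply/ffunP => g; rewrite !ffunE; apply: perm_big. Qed.

Lemma sprod_filterC (p : pred (gseq G)) s :
  sprod s = sadd (sprod (filter p s)) (sprod (filter (predC p) s)).
Proof. by rewrite -sprod_cat; apply: sprod_perm; rewrite perm_sym perm_filterC. Qed.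

Lemma ssub_sprod_mem A s : A \in s -> ssub A (sprod s).
Proof. by move=> As; rewrite (sprod_perm (perm_to_rem As)) sprod_cons ssub_saddr. Qed.

Lemma slen_sprod s : slen (sprod s) = \sum_(A <- s) slen A.
Proof.
elim: s => [|A s IH]; last by rewrite sprod_cons slen_sadd IH big_cons.
by rewrite sprod_nil slen_snil big_nil.
Qed.

Lemma slen_sprod_le s c : (forall A, A \in s -> slen A <= c) -> slen (sprod s) <= size s * c.
Proof.
move=> le_c; rewrite slen_sprod -sum1_size big_distrl big_seq [X in _ <= X]big_seq /=.
by apply: leq_sum => A As; rewrite mul1n le_c.
Qed.

Lemma zero_sum_sprod s : (forall A, A \in s -> zero_sum A) -> zero_sum (sprod s).
Proof.
elim: s => [|A s IH] zs; first by rewrite sprod_nil /zero_sum ssum_snil.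
have zA : ssum A = 0%R by apply: zs; rewrite mem_head.
rewrite sprod_cons /zero_sum ssum_sadd zA GRing.add0r; apply: IH => B Bs.
by apply: zs; rewrite inE Bs orbT.
Qed.

End Sequences.

Section DisjointZeroSums.
Variable G : finZmodType.
Implicit Types (S T B : gseq G).

Lemma disjoint_zs0 S : has_k_disjoint_zs 0 S.
Proof. by exists [::]; rewrite sprod_nil; split; split => //; apply/ssubP => g; rewrite ffunE. Qed.

Lemma disjoint_zs_leq j j' S : j' <= j -> has_k_disjoint_zs j S -> has_k_disjoint_zs j' S.
Proof.
move=> le_j [Ts [size_Ts [zTs TsS]]]; exists (take j' Ts).
split; first by rewrite size_take_min size_Ts; lia.
split=> [T /mem_take|]; first exact: zTs.
by apply: ssub_trans TsS; rewrite -{2}(cat_take_drop j' Ts) sprod_cat ssub_saddr.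
Qed.

Lemma disjoint_zs_cons j S T :
  0 < slen T -> zero_sum T -> ssub T S -> has_k_disjoint_zs j (sdiff S T) ->
  has_k_disjoint_zs j.+1 S.
Proof.
move=> T0 zT TS [Ts [<- [zTs TsS]]]; exists (T :: Ts); split=> //; split.
  by move=> U; rewrite inE => /predU1P[->|/zTs].
by rewrite sprod_cons -(sadd_sdiff TS) ssub_sadd2 ?ssub_refl.
Qed.

Lemma disjoint_zs_sadd a b S T :
  has_k_disjoint_zs a S -> has_k_disjoint_zs b T -> has_k_disjoint_zs (a + b) (sadd S T).
Proof.
move=> [Ts [<- [zTs TsS]]] [Us [<- [zUs UsT]]]; exists (Ts ++ Us).
split; first by rewrite size_cat.
split; first by move=> U; rewrite mem_cat => /orP[/zTs|/zUs].
by rewrite sprod_cat ssub_sadd2.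
Qed.

(* The extra term x lies in at most one of the disjoint subsequences. *)
Lemma disjoint_zs_spow1 j S x :
  has_k_disjoint_zs j.+1 (sadd S (spow x 1)) -> has_k_disjoint_zs j S.
Proof.
move=> [Ts [size_Ts [zTs /ssubP TsSx]]].
have [/hasP[T TTs Tx]|/hasPn Tsx] := boolP (has (fun T : gseq G => 0 < T x) Ts).
  exists (rem T Ts); split; first by rewrite size_rem // size_Ts.
  split=> [U /mem_rem|]; first exact: zTs.
  apply/ssubP => g; have := TsSx g.
  rewrite (sprod_perm (perm_to_rem TTs)) sprod_cons !ffunE.
  by case: (eqVneq g x) => [->|]; lia.
exists (behead Ts); split; first by rewrite size_behead size_Ts.
split=> [U /mem_behead|]; first exact: zTs.
have sprodE : sprod Ts = sadd (head (snil G) Ts) (sprod (behead Ts)).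
  by case: Ts size_Ts {zTs TsSx Tsx} => // A s _; rewrite sprod_cons.
have Ts_x : sprod Ts x = 0.
  by rewrite ffunE big_seq big1 // => U /Tsx; rewrite lt0n negbK => /eqP.
apply/ssubP => g; have := TsSx g; move: Ts_x; rewrite sprodE !ffunE.
by case: (eqVneq g x) => [->|]; lia.
Qed.

Lemma disjoint_zs_complement j S B :
  zero_sum B -> ssub S B -> slen S < slen B ->
  has_k_disjoint_zs j S -> has_k_disjoint_zs j.+1 B.
Proof.
move=> zB SB ltSB [Ts [<- [zTs TsS]]].
have TsB := ssub_trans TsS SB.
exists (sdiff B (sprod Ts) :: Ts); split=> //; split; last first.
  by rewrite sprod_cons saddC sadd_sdiff // ssub_refl.
move=> U; rewrite inE => /predU1P[->|/zTs //].
split; last by apply: zero_sum_sdiff => //; apply: zero_sum_sprod => T /zTs[].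
by rewrite slen_sdiff //; have := slen_ssub TsS; lia.
Qed.

Lemma slen_gt0_disjoint_zs j S : has_k_disjoint_zs j.+1 S -> 0 < slen S.
Proof.
move=> [[|T Ts] [//= _ [zTs TsS]]]; have [T0 _] := zTs T (mem_head T Ts).
by apply: leq_trans T0 (slen_ssub (ssub_trans (ssub_sprod_mem (mem_head T Ts)) TsS)).
Qed.

End DisjointZeroSums.

Section Factorizations.
Variable G : finZmodType.
Implicit Types (S T B : gseq G) (z : seq (gseq G)).

Lemma ssub_slen_eq T S : ssub T S -> slen S <= slen T -> T = S.
Proof.
move=> TS leST; have /slen_eq0 STnil : slen (sdiff S T) = 0.
  by rewrite slen_sdiff //; apply/eqP; rewrite subn_eq0.
by rewrite -(sadd_sdiff TS) STnil; apply/ffunP => g; rewrite !ffunE addn0.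
Qed.

Lemma minimal_zero_sum_ssub B :
  0 < slen B -> zero_sum B -> exists2 A, minimal_zero_sum A & ssub A B.
Proof.
move: {2}(slen B) (leqnn (slen B)) => n; elim: n B => [|n IH] B lenB B0 zB; first lia.
have [minB|nminB] := classic (minimal_zero_sum B); first by exists B; rewrite ?ssub_refl.
have [T [TB [T0 [zT TnB]]]] : exists T, ssub T B /\ 0 < slen T /\ zero_sum T /\ T <> B.
  apply: NNPP => noT; apply: nminB; split=> //; split=> // T TB T0 zT.
  by apply: NNPP => TnB; apply: noT; exists T.
have ltTB : slen T < slen B.
  rewrite ltn_neqAle slen_ssub // andbT; apply/eqP => eTB.
  by apply: TnB; apply: ssub_slen_eq; rewrite // eTB.
have [|A minA AT] := IH T _ T0 zT; first lia.
by exists A; last exact: ssub_trans AT TB.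
Qed.

Lemma factorization_exists B : zero_sum B -> exists z, factorization_of z B.
Proof.
move: {2}(slen B) (leqnn (slen B)) => n; elim: n B => [|n IH] B lenB zB.
  by exists [::]; split; rewrite // sprod_nil (slen_eq0 (S := B)) //; lia.
have [/slen_eq0 ->|B0] := posnP (slen B); first by exists [::]; split; rewrite // sprod_nil.
have [A minA AB] := minimal_zero_sum_ssub B0 zB.
have [A0 [zA _]] := minA.
have [|z [atoms_z ez]] := IH (sdiff B A) _ (zero_sum_sdiff AB zB zA).
  by rewrite slen_sdiff //; lia.
exists (A :: z); split; last by rewrite sprod_cons ez sadd_sdiff.
by move=> U; rewrite inE => /predU1P[->|/atoms_z].
Qed.

Lemma factorization_size_gt0 z B : factorization_of z B -> 0 < slen B -> 0 < size z.
Proof. by case: z => [[_ <-]|//]; rewrite sprod_nil slen_snil. Qed.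

Lemma factorization_size_le z B : factorization_of z B -> size z <= slen B.
Proof.
move=> [atoms_z <-]; rewrite slen_sprod -sum1_size big_seq [X in _ <= X]big_seq.
by apply: leq_sum => A /atoms_z[].
Qed.

Lemma disjoint_zs_factorization z B : factorization_of z B -> has_k_disjoint_zs (size z) B.
Proof.
move=> [atoms_z <-]; exists z; split=> //; split; last exact: ssub_refl.
by move=> A /atoms_z[A0 [zA _]].
Qed.

Lemma factorization_disjoint_zs j B :
  zero_sum B -> has_k_disjoint_zs j B -> exists2 z, factorization_of z B & j <= size z.
Proof.
elim: j B => [|j IH] B zB.
  by move=> _; have [z fz] := factorization_exists zB; exists z.
move=> [[|T Ts] [//= [size_Ts] [zTs TsB]]].
have [T0 zT] := zTs T (mem_head T Ts).
have TB := ssub_trans (ssub_sprod_mem (mem_head T Ts)) TsB.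
have [|z [atoms_z ez] le_jz] := IH (sdiff B T) (zero_sum_sdiff TB zB zT).
  exists Ts; split=> //; split=> [U UTs|]; first by apply: zTs; rewrite inE UTs orbT.
  by apply/ssubP => g; move/ssubP: TsB => /(_ g); rewrite sprod_cons !ffunE; lia.
have [zT' [atoms_zT' ezT']] := factorization_exists zT.
have zT'_gt0 := factorization_size_gt0 (conj atoms_zT' ezT') T0.
exists (zT' ++ z); last by rewrite size_cat; lia.
split; first by move=> U; rewrite mem_cat => /orP[/atoms_zT'|/atoms_z].
by rewrite sprod_cat ezT' ez sadd_sdiff.
Qed.

Lemma max_factorization B : zero_sum B ->
  exists2 z, factorization_of z B & forall x, factorization_of x B -> size x <= size z.
Proof.
move=> zB; pose P l := pbool (in_lengths B l).
have exP : exists l, P l.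
  by have [z fz] := factorization_exists zB; exists (size z); apply/pboolP; exists z.
have ubP l : P l -> l <= slen B by move=> /pboolP[z [fz <-]]; apply: factorization_size_le fz.
have [_ /pboolP[z [fz <-]] maxz] := ex_maxnP exP ubP.
by exists z => // x fx; apply: maxz; apply/pboolP; exists x.
Qed.

End Factorizations.

Section Atoms.
Variable G : finZmodType.
Implicit Types (A B : gseq G) (s z : seq (gseq G)).

Lemma minimal_zero_sum_mult_le A g : minimal_zero_sum A -> A g <= #|G|.
Proof.
move=> [_ [_ minA]]; rewrite leqNgt; apply/negP => ltGA.
have gA : ssub (spow g #|G|) A.
  by apply/ssubP => x; rewrite ffunE; case: eqP => [->|_]; rewrite ?mul1n // ltnW.
have G_gt0 : 0 < slen (spow g #|G|) by rewrite slen_spow; apply/card_gt0P; exists g.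
have zg : zero_sum (spow g #|G|).
  rewrite /zero_sum ssum_spow; have := @cyclic.expg_cardG _ [set: G]%G g (in_setT g).
  by rewrite FinRing.zmodXgE cardsT.
by move: ltGA; rewrite -(minA _ gA G_gt0 zg) ffunE eqxx mul1n ltnn.
Qed.

Lemma size_undup_atoms s :
  (forall A, A \in s -> minimal_zero_sum A) -> size (undup s) <= card_atoms G.
Proof.
move=> atoms_s; pose code A : {ffun G -> 'I_#|G|.+1} := [ffun g => inord (A g)].
have codeK A : minimal_zero_sum A -> [ffun g => nat_of_ord (code A g)] = A.
  by move=> minA; apply/ffunP => g; rewrite !ffunE inordK // ltnS minimal_zero_sum_mult_le.
have atoms_u A : A \in undup s -> minimal_zero_sum A by rewrite mem_undup => /atoms_s.
rewrite -(size_map code) /card_atoms cardE; apply: uniq_leq_size.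
  rewrite map_inj_in_uniq ?undup_uniq // => A A' /atoms_u minA /atoms_u minA' eq_code.
  by rewrite -(codeK A minA) -(codeK A' minA') eq_code.
by move=> _ /mapP[A /atoms_u minA ->]; rewrite mem_enum inE; apply/pboolP; rewrite codeK.
Qed.

Lemma atoms_pigeonhole s d :
  (forall A, A \in s -> minimal_zero_sum A) -> 0 < size s -> d * card_atoms G <= size s ->
  exists2 A, A \in s & d <= count_mem A s.
Proof.
move=> atoms_s s_gt0 le_ds; apply: NNPP => no_A.
have lt_d A : A \in s -> count_mem A s < d.
  by move=> As; rewrite ltnNge; apply/negP => le_dA; apply: no_A; exists A.
have [A As] : exists A, A \in s.
  by case: s s_gt0 {atoms_s le_ds no_A lt_d} => // A s; exists A; rewrite mem_head.
have d_gt0 : 0 < d := leq_ltn_trans (leq0n _) (lt_d A As).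
have : size s <= size (undup s) * d.-1.
  rewrite -(@sum_count_mem_cover _ _ s (undup_uniq s)) => [|B]; last by rewrite mem_undup.
  rewrite -sum1_size big_distrl big_seq [X in _ <= X]big_seq /=.
  by apply: leq_sum => B; rewrite mem_undup mul1n => /lt_d lt_Bd; rewrite -ltnS prednK.
have u_gt0 : 0 < size (undup s).
  by rewrite lt0n size_eq0; apply/eqP => u0; rewrite -mem_undup u0 in As.
move: (size_undup_atoms atoms_s) le_ds; move: (card_atoms G) => C le_uC le_ds le_su.
have : d * C <= C * d.-1 by apply: leq_trans le_ds (leq_trans le_su (leq_mul le_uC _)).
by case: d d_gt0 {no_A lt_d le_ds le_su} => // d _; rewrite mulSn mulnC; lia.
Qed.

End Atoms.

Section SuccessiveDistance.
Variable G : finZmodType.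
Implicit Types (A B : gseq G) (x z : seq (gseq G)).

Lemma gcd_size_count_le x z A :
  A \in z -> A \notin x -> gcd_size x z + count_mem A z <= size z.
Proof.
move=> Az Ax; rewrite /gcd_size; set u := undup (x ++ z).
have Au : A \in u by rewrite mem_undup mem_cat Az orbT.
have zu : {subset z <= u} by move=> y yz; rewrite mem_undup mem_cat yz orbT.
rewrite -(sum_count_mem_cover (undup_uniq _) zu) (bigD1_seq A) ?undup_uniq //=.
rewrite [X in _ <= X](bigD1_seq A) ?undup_uniq //= (count_memPn Ax) min0n add0n addnC leq_add2l.
by apply: leq_sum => y _; apply: geq_minr.
Qed.

(* A factorization of A B longer than |z| + 1 would give a length adjacent to |A z|
   from above, reached within distance dG of A z; as A occurs more than dG times
   in A z, that factorization contains A, and removing it beats the maximality of z. *)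
Lemma max_factorization_sadd_atom dG B z A :
  is_succ_dist G dG -> factorization_of z B ->
  (forall x, factorization_of x B -> size x <= size z) ->
  minimal_zero_sum A -> dG <= count_mem A z ->
  forall x, factorization_of x (sadd A B) -> size x <= (size z).+1.
Proof.
move=> [delta_dG _] [atoms_z ez] maxz minA le_dG x0 fx0; rewrite leqNgt; apply/negP => ltx0.
have fAz : factorization_of (A :: z) (sadd A B).
  by split; [move=> U; rewrite inE => /predU1P[->|/atoms_z]|rewrite sprod_cons ez].
pose P l := pbool (in_lengths (sadd A B) l /\ (size z).+1 < l).
have exP : exists l, P l by exists (size x0); apply/pboolP; split=> //; exists x0.
have [l /pboolP[lenl ltl] minl] := ex_minnP exP.
have adj : adjacent_lengths (sprod (A :: z)) l (size (A :: z)).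
  rewrite fAz.2; split; first by rewrite /=; lia.
  split=> //; split; first by exists (A :: z).
  move=> p /= /andP[lt1 lt2] lenp.
  have : l <= p by apply: minl; apply/pboolP; split=> //; lia.
  lia.
have [xi [[atoms_xi exi] [size_xi dist_xi]]] := delta_dG (A :: z) fAz.1 l adj.
have A_xi : A \in xi.
  apply/negPn/negP => Anxi; have := gcd_size_count_le (mem_head A z) Anxi.
  move: dist_xi; rewrite /fdist geq_max => /andP[_]; rewrite /= eqxx add1n.
  by move: le_dG; set c := count_mem A z; set gcd := gcd_size _ _; lia.
have frem : factorization_of (rem A xi) B.
  split=> [U /mem_rem /atoms_xi //|]; apply: (@saddI _ A).
  by rewrite -sprod_cons -(sprod_perm (perm_to_rem A_xi)) exi sprod_cons ez.
by have := maxz _ frem; rewrite size_rem // size_xi; lia.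
Qed.

End SuccessiveDistance.

Section DavenportConstants.
Variable G : finZmodType.
Implicit Types (S T : gseq G).

Lemma eta_disjoint_zs eta j S :
  is_eta G eta -> eta + j * expG G <= slen S -> has_k_disjoint_zs j.+1 S.
Proof.
move=> [short_zs _]; elim: j S => [|j IH] S le_S.
  have [T [TS [/andP[T0 _] zT]]] := short_zs S (leq_trans (leq_addr _ _) le_S).
  exact: disjoint_zs_cons T0 zT TS (disjoint_zs0 _).
have [T [TS [/andP[T0 Te] zT]]] := short_zs S (leq_trans (leq_addr _ _) le_S).
apply: (disjoint_zs_cons T0 zT TS (IH _ _)).
by rewrite slen_sdiff //; move: le_S; rewrite mulSn; lia.
Qed.

Lemma Dk_succ_le k Dk Dk1 eta :
  is_Dk G k Dk -> is_Dk G k.+1 Dk1 -> is_eta G eta -> eta <= Dk + expG G ->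
  Dk1 <= Dk + expG G.
Proof.
move=> [Dk_zs _] [_ Dk1_min] [short_zs _] le_eta; apply: Dk1_min => S le_S.
have [T [TS [/andP[T0 Te] zT]]] := short_zs S (leq_trans le_eta le_S).
apply: (disjoint_zs_cons T0 zT TS (Dk_zs _ _)).
by rewrite slen_sdiff //; lia.
Qed.

Lemma Dk_extremal k Dk :
  is_Dk G k.+1 Dk -> exists2 S : gseq G, (slen S).+1 = Dk & ~ has_k_disjoint_zs k.+1 S.
Proof.
move=> [Dk_zs Dk_min]; have Dk_gt0 : 0 < Dk.
  rewrite lt0n; apply/eqP => Dk0.
  have := Dk_zs (snil G); rewrite Dk0 slen_snil => /(_ isT) /slen_gt0_disjoint_zs.
  by rewrite slen_snil.
have [S le_S noS] : exists2 S : gseq G, Dk.-1 <= slen S & ~ has_k_disjoint_zs k.+1 S.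
  apply: NNPP => noS; suff : Dk <= Dk.-1 by lia.
  by apply: Dk_min => S le_S; apply: NNPP => nS; apply: noS; exists S.
exists S => //; have : ~ (Dk <= slen S) by move/Dk_zs.
lia.
Qed.

End DavenportConstants.

Section MaximalFactorizations.
Variable G : finZmodType.
Implicit Types (S B : gseq G) (z : seq (gseq G)).

Lemma factorization_size_sadd_spow1 k S x z :
  ~ has_k_disjoint_zs k S -> factorization_of z (sadd S (spow x 1)) -> size z <= k.
Proof.
move=> noS fz; rewrite leqNgt; apply/negP => ltkz; apply: noS; apply: (@disjoint_zs_spow1 _ _ _ x).
exact: disjoint_zs_leq ltkz (disjoint_zs_factorization fz).
Qed.

Lemma no_disjoint_zs_ssub j S B :
  zero_sum B -> ssub S B -> slen S < slen B ->
  (forall x, factorization_of x B -> size x <= j) -> ~ has_k_disjoint_zs j S.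
Proof.
move=> zB SB ltSB maxB /(disjoint_zs_complement zB SB ltSB) /(factorization_disjoint_zs zB).
by case=> x /maxB; lia.
Qed.

Lemma slen_sprod_filter_max_factorization eta (p : pred (gseq G)) z B :
  is_eta G eta -> factorization_of z B -> (forall x, factorization_of x B -> size x <= size z) ->
  slen (sprod (filter p z)) < eta + size (filter p z) * expG G.
Proof.
move=> eta_def [atoms_z ez] maxz; rewrite ltnNge; apply/negP.
move=> /(eta_disjoint_zs eta_def) zs_p.
have fC : factorization_of (filter (predC p) z) (sprod (filter (predC p) z)).
  by split=> // A; rewrite mem_filter => /andP[_ /atoms_z].
have zB : zero_sum B by rewrite -ez; apply: zero_sum_sprod => A /atoms_z[_ []].
have := disjoint_zs_sadd zs_p (disjoint_zs_factorization fC).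
rewrite -sprod_filterC ez => /(factorization_disjoint_zs zB)[x fx].
by have := maxz x fx; rewrite !size_filter addSn count_predC; lia.
Qed.


Lemma max_factorization_frequent_long_atom eta dG k z B :
  is_eta G eta -> factorization_of z B -> (forall x, factorization_of x B -> size x <= size z) ->
  size z <= k -> k * (expG G).-1 < slen B ->
  dG * expG G * card_atoms G + eta + k * (expG G).-1 <= (slen B).+1 ->
  exists2 A, minimal_zero_sum A /\ expG G <= slen A & dG <= count_mem A z.
Proof.
move=> eta_def fz maxz le_zk le_kB le_B.
pose long : pred (gseq G) := fun A => expG G <= slen A.
have e_gt0 : 0 < expG G := exponent_gt0 _.
have short_A A : A \in filter (predC long) z -> slen A <= (expG G).-1.
  by rewrite mem_filter /= /long -ltnNge => /andP[ltA _]; rewrite -ltnS prednK.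
have size_short : size (filter (predC long) z) <= k.
  by rewrite size_filter (leq_trans (count_size _ _)).
have len_short := leq_trans (slen_sprod_le short_A) (leq_mul size_short (leqnn (expG G).-1)).
have len_long := slen_sprod_filter_max_factorization long eta_def fz maxz.
have lenB : slen B = slen (sprod (filter long z)) + slen (sprod (filter (predC long) z)).
  by rewrite -slen_sadd -sprod_filterC fz.2.
have zl_gt0 : 0 < size (filter long z).
  have : 0 < slen (sprod (filter long z)) by lia.
  by case: (filter long z) => //; rewrite sprod_nil slen_snil.
have le_zl : dG * card_atoms G <= size (filter long z).
  have : dG * expG G * card_atoms G <= size (filter long z) * expG G by lia.
  by rewrite mulnAC leq_pmul2r.
have atoms_zl A : A \in filter long z -> minimal_zero_sum A.
  by rewrite mem_filter => /andP[_ /fz.1].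
have [A A_zl le_dGA] := atoms_pigeonhole atoms_zl zl_gt0 le_zl.
exists A; first by split; [exact: atoms_zl | move: A_zl; rewrite mem_filter => /andP[]].
by apply: leq_trans le_dGA _; rewrite count_filter; apply: sub_count => y /andP[].
Qed.
End MaximalFactorizations.

Section Transport.
Variables (H G : finZmodType) (f : {additive H -> G}).
Hypothesis f_bij : bijective f.

Lemma slen_comp (S : gseq G) : slen [ffun p => S (f p)] = slen S.
Proof.
rewrite /slen [RHS](reindex f (onW_bij _ f_bij)).
by apply: eq_bigr => p _; rewrite ffunE.
Qed.

Lemma ssum_comp (S : gseq G) : f (ssum [ffun p => S (f p)]) = ssum S.
Proof.
rewrite /ssum [RHS](reindex f (onW_bij _ f_bij)) raddf_sum.
by apply: eq_bigr => p _; rewrite ffunE raddfMn.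
Qed.

Lemma disjoint_zs_comp k (S : gseq G) :
  has_k_disjoint_zs k S -> has_k_disjoint_zs k [ffun p => S (f p)].
Proof.
move=> [Ts [size_Ts [zTs /ssubP TsS]]].
exists (map (fun T : gseq G => [ffun p => T (f p)]) Ts); split; first by rewrite size_map.
split=> [_ /mapP[T /zTs[T0 zT] ->]|].
  split; first by rewrite slen_comp.
  by apply: (bij_inj f_bij); rewrite ssum_comp zT raddf0.
apply/ssubP => p; rewrite !ffunE big_map; under eq_bigr do rewrite ffunE.
by have := TsS (f p); rewrite ffunE.
Qed.

End Transport.

Lemma zero_sum_free_mult0 (G : finZmodType) (T : gseq G) :
  ~ has_k_disjoint_zs 1 T -> T 0%R = 0.
Proof.
move=> T_zsfree; apply/eqP; rewrite -leqn0 leqNgt; apply/negP => T0; apply: T_zsfree.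
apply: (disjoint_zs_cons (T := spow 0%R 1)) (disjoint_zs0 _).
- by rewrite slen_spow.
- by rewrite /zero_sum ssum_spow GRing.mulr1n.
- by apply/ssubP => g; rewrite ffunE; case: eqP => [->|]; rewrite ?mul1n.
Qed.

(* Provides the missing finZmodType instance on products of finite Z-modules. *)
HB.saturate prod.

Section ProductLowerBound.
Variables (H : finZmodType) (n : nat).
Local Notation K := (H * 'I_n.+1)%type.
Local Notation g := ((0, Zp1) : K)%R.

Lemma big_snd0 {R : Type} {idx : R} {op : Monoid.com_law idx} (F : K -> R) :
  (forall p, p.2 != 0%R -> F p = idx) -> \big[op/idx]_p F p = \big[op/idx]_a F (a, 0%R).
Proof.
move=> F0; transitivity (\big[op/idx]_p F (p.1, p.2)); first by apply: eq_bigr => -[].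
rewrite -(pair_bigA _ (fun a b => F (a, b))) /=; apply: eq_bigr => a _.
by rewrite (bigD1 0%R) //= big1 ?Monoid.mulm1 // => b b0; apply: F0.
Qed.

Definition sembed (T : gseq H) : gseq K := [ffun p => (p.2 == 0%R) * T p.1].

Lemma slen_sembed T : slen (sembed T) = slen T.
Proof.
rewrite /slen (big_snd0 (F := sembed T)) => [|p p2]; last by rewrite ffunE (negbTE p2).
by apply: eq_bigr => a _; rewrite ffunE eqxx mul1n.
Qed.

Variable T : gseq H.
Hypothesis T_zsfree : ~ has_k_disjoint_zs 1 T.

(* The second coordinate of a zero sum forces n.+1 %| U g; if U g = 0, the first
   coordinates of U would form a zero-sum subsequence of T. *)
Lemma ssub_sembed_zero_sum m (U : gseq K) :
  ssub U (sadd (sembed T) (spow g m)) -> 0 < slen U -> zero_sum U -> n.+1 <= U g.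
Proof.
move=> /ssubP US U0 zU.
have U_off p : p.2 != 0%R -> p != g -> U p = 0.
  move=> p2 pg; apply/eqP; rewrite -leqn0.
  by have := US p; rewrite !ffunE (negbTE p2) (negbTE pg).
have dvd_Ug : n.+1 %| U g.
  have : (ssum U).2 = (Zp1 *+ U g)%R.
    rewrite /ssum raddf_sum (bigD1 g) //= big1 ?GRing.addr0 ?raddfMn // => p pg.
    rewrite raddfMn /=; have [->|p2] := eqVneq p.2 0%R; first by rewrite GRing.mul0rn.
    by rewrite U_off // GRing.mulr0n.
  by rewrite zU Zp_mulrn => /(congr1 val) /=; rewrite modnMml mul1n /dvdn => <-.
rewrite dvdn_leq // lt0n; apply/eqP => Ug0; apply: T_zsfree.
have U_off' p : p.2 != 0%R -> U p = 0.
  by move=> p2; have [->|pg] := eqVneq p g; [exact: Ug0|exact: U_off].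
pose V : gseq H := [ffun a => U (a, 0%R)].
apply: (disjoint_zs_cons (T := V)) (disjoint_zs0 _).
- rewrite /slen (big_snd0 (F := U)) // in U0.
  by rewrite /slen; under eq_bigr do rewrite ffunE.
- have := congr1 fst zU; rewrite /ssum raddf_sum (big_snd0 (F := fun p => ((p *+ U p)%R).1)).
    by move=> sum1; apply: etrans sum1; apply: eq_bigr => a _; rewrite ffunE raddfMn.
  by move=> p p2; rewrite U_off' // GRing.mulr0n.
- apply/ssubP => a; rewrite ffunE; have := US (a, 0%R); rewrite !ffunE eqxx mul1n.
  by have [->|_] := eqVneq (a, 0%R) g; rewrite ?Ug0 // mul0n addn0.
Qed.

Lemma sembed_no_disjoint_zs k m :
  m < k * n.+1 -> ~ has_k_disjoint_zs k (sadd (sembed T) (spow g m)).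
Proof.
move=> lt_m [Ts [size_Ts [zTs TsS]]]; rewrite -size_Ts in lt_m.
have : size Ts * n.+1 <= sprod Ts g.
  rewrite ffunE -sum1_size big_distrl big_seq [X in _ <= X]big_seq /=.
  apply: leq_sum => U UTs; have [U0 zU] := zTs U UTs; rewrite mul1n.
  exact: ssub_sembed_zero_sum (ssub_trans (ssub_sprod_mem UTs) TsS) U0 zU.
move/ssubP: TsS => /(_ g); rewrite !ffunE eqxx mul1n /= (zero_sum_free_mult0 T_zsfree) muln0.
lia.
Qed.

End ProductLowerBound.

Lemma Dk_ge_Gminus (G Gm : finZmodType) k Dk DGm :
  0 < k -> is_Gminus G Gm -> is_Dk Gm 1 DGm -> is_Dk G k Dk -> DGm + k * expG G <= Dk.+1.
Proof.
move=> k_gt0 [f f_bij] DGm_def [Dk_zs _].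
have [T lenT T_zsfree] := Dk_extremal DGm_def.
have ke_gt0 : 0 < k * expG G by rewrite muln_gt0 k_gt0 exponent_gt0.
pose S' := sadd (sembed (expG G).-1 T) (spow (0, Zp1)%R (k * expG G).-1).
have [finv fK _] := f_bij.
pose S : gseq G := [ffun x => S' (finv x)].
have SfE : [ffun p => S (f p)] = S' by apply/ffunP => p; rewrite !ffunE fK.
have noS : ~ has_k_disjoint_zs k S.
  move/(disjoint_zs_comp f_bij); rewrite SfE; apply: sembed_no_disjoint_zs => //.
  by rewrite (prednK (exponent_gt0 _)) prednK.
have : ~ (Dk <= slen S) by move/Dk_zs.
by rewrite -(slen_comp f_bij) SfE slen_sadd slen_sembed slen_spow; lia.
Qed.

Lemma Dk_succ_ge (G : finZmodType) k dG eta Dk Dk1 :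
  0 < k -> is_succ_dist G dG -> is_eta G eta -> is_Dk G k Dk -> is_Dk G k.+1 Dk1 ->
  k * (expG G).-1 < Dk -> dG * expG G * card_atoms G + eta + k * (expG G).-1 <= Dk.+1 ->
  Dk + expG G <= Dk1.
Proof.
move=> k_gt0 delta_dG eta_def Dk_def [Dk1_zs _] le_kDk le_Dk.
rewrite -(prednK k_gt0) in Dk_def; have [S0 lenS0 noS0] := Dk_extremal Dk_def.
rewrite prednK // in noS0.
pose B := sadd S0 (spow (- ssum S0)%R 1).
have zB : zero_sum B by rewrite /zero_sum ssum_sadd ssum_spow GRing.mulr1n GRing.addrN.
have lenB : slen B = Dk by rewrite slen_sadd slen_spow addn1.
have [z fz maxz] := max_factorization zB.
have le_zk := factorization_size_sadd_spow1 noS0 fz.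
rewrite -lenB in le_kDk le_Dk.
have [A [minA longA] le_dGA] :=
  max_factorization_frequent_long_atom eta_def fz maxz le_zk le_kDk le_Dk.
have maxAB := max_factorization_sadd_atom delta_dG fz maxz minA le_dGA.
have [_ [zA _]] := minA.
have zAB : zero_sum (sadd A B) by rewrite /zero_sum ssum_sadd zA zB GRing.addr0.
have noS0A : ~ has_k_disjoint_zs k.+1 (sadd S0 A).
  apply: (no_disjoint_zs_ssub zAB) => [| |x /maxAB]; last by lia.
    by apply/ssubP => g; rewrite !ffunE; lia.
  by rewrite !slen_sadd slen_spow; lia.
have : ~ (Dk1 <= slen (sadd S0 A)) by move/Dk1_zs.
by rewrite slen_sadd; lia.
Qed.

Theorem proposition6p2 (G Gm : finZmodType) (k dG Dk Dk1 DGm eta : nat) :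
  (0 < k)%N ->
  is_succ_dist G dG ->
  is_Dk G k Dk ->
  is_Dk G k.+1 Dk1 ->
  is_Gminus G Gm ->
  is_Dk Gm 1 DGm ->
  is_eta G eta ->
  (dG * expG G * card_atoms G + eta <= k + DGm)%N ->
  Dk1 = (Dk + expG G)%N.
Proof.
move=> k_gt0 delta_dG Dk_def Dk1_def Gm_def DGm_def eta_def le_k.
have e_gt0 : 0 < expG G := exponent_gt0 _.
have [T lenT _] := Dk_extremal DGm_def.
have le_Dk := Dk_ge_Gminus k_gt0 Gm_def DGm_def Dk_def.
have ke_split : k * (expG G).-1 + k = k * expG G by rewrite -mulnSr prednK.
apply/eqP; rewrite eqn_leq; apply/andP; split.
  by apply: (Dk_succ_le Dk_def Dk1_def eta_def); lia.
by apply: (Dk_succ_ge k_gt0 delta_dG eta_def Dk_def Dk1_def); lia.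
Qed.
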